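(* Let $E$, $D$, $S$ be binary random variables taking values in $\{0,1\}$ such that every joint cell probability $P(E=e,D=d,S=s)$ is positive, and write $p(d,e)=P(S=1\mid D=d,E=e)$. Suppose there is no interaction of $E$ and $D$ on $S$ on the risk difference scale, i.e. $\mathrm{RD}_{ES\mid D=1}=\mathrm{RD}_{ES\mid D=0}$ (equivalently $p(1,1)-p(1,0)=p(0,1)-p(0,0)$). (a) If $p(d,e)$ is non-decreasing in both $d$ and $e$, or non-increasing in both $d$ and $e$, then $\mathrm{OR}_{ED\mid S=1}\le \mathrm{OR}_{ED}$. (b) If $p(d,e)$ is non-decreasing in one of $d,e$ and non-increasing in the other, then $\mathrm{OR}_{ED\mid S=1}\ge \mathrm{OR}_{ED}$.
   Context: For binary random variables $A,B$ and a random variable $C$, $\mathrm{OR}_{AB\mid C=c}=\frac{P(A=1,B=1\mid C=c)P(A=0,B=0\mid C=c)}{P(A=1,B=0\mid C=c)P(A=0,B=1\mid C=c)}$, $\mathrm{OR}_{AB}$ is the unconditional version, and $\mathrm{RD}_{AB\mid C=c}=P(B=1\mid A=1,C=c)-P(B=1\mid A=0,C=c)$. ''Non-decreasing in $d$'' means $p(1,e)\ge p(0,e)$ for each $e$; ''non-decreasing in $e$'' means $p(d,1)\ge p(d,0)$ for each $d$; non-increasing analogously. *)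

(* A joint law of three binary random variables (E, D, S),
   encoded as the table of cell probabilities P e d s = P(E=e, D=d, S=s),
   with true = 1 and false = 0. *)
From mathcomp Require Import all_boot all_order all_algebra.
Set Implicit Arguments. Unset Strict Implicit. Unset Printing Implicit Defensive.
Import Order.TTheory GRing.Theory Num.Theory.
Local Open Scope ring_scope.

Section Defs.
Variable R : realFieldType.
Definition joint := bool -> bool -> bool -> R.

Definition is_pos_joint (P : joint) : Prop :=
  (forall e d s, 0 < P e d s) /\
  \sum_(e : bool) \sum_(d : bool) \sum_(s : bool) P e d s = 1.

Definition prob (P : joint) (A : bool -> bool -> bool -> bool) : R :=
  \sum_(e : bool) \sum_(d : bool) \sum_(s : bool) (if A e d s then P e d s else 0).

Definition cprob (P : joint) (A B : bool -> bool -> bool -> bool) : R :=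
  prob P (fun e d s => A e d s && B e d s) / prob P B.

Definition pS (P : joint) (d e : bool) : R :=
  cprob P (fun _ _ s => s) (fun e' d' _ => (e' == e) && (d' == d)).

Definition pED_S (P : joint) (e d s : bool) : R :=
  cprob P (fun e' d' _ => (e' == e) && (d' == d)) (fun _ _ s' => s' == s).

Definition pED (P : joint) (e d : bool) : R :=
  prob P (fun e' d' _ => (e' == e) && (d' == d)).

Definition OR_ED_S (P : joint) (s : bool) : R :=
  (pED_S P true true s * pED_S P false false s) /
  (pED_S P true false s * pED_S P false true s).

Definition OR_ED (P : joint) : R :=
  (pED P true true * pED P false false) / (pED P true false * pED P false true).

Definition RD_ES_D (P : joint) (d : bool) : R := pS P d true - pS P d false.

Definition nondec_d (P : joint) : Prop := forall e, pS P false e <= pS P true e.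
Definition noninc_d (P : joint) : Prop := forall e, pS P true e <= pS P false e.
Definition nondec_e (P : joint) : Prop := forall d, pS P d false <= pS P d true.
Definition noninc_e (P : joint) : Prop := forall d, pS P d true <= pS P d false.
End Defs.

(* Writing n(e,d) = P(E=e, D=d), the cells with S = 1 are P(e,d,1) = p(d,e) n(e,d), so
   OR_{ED|S=1} = OR_{ED} * p(1,1) p(0,0) / (p(1,0) p(0,1)).  Without interaction on the
   additive scale, p(1,1) = p(1,0) + p(0,1) - p(0,0), hence
   p(1,1) p(0,0) - p(1,0) p(0,1) = - (p(1,0) - p(0,0)) (p(0,1) - p(0,0)),
   a product of the effect of D at E = 0 and the effect of E at D = 0.  Its sign is fixed
   by the monotonicity assumptions and decides on which side of 1 the factor lies. *)
From mathcomp Require Import all_boot all_order all_algebra.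
From mathcomp Require Import ring.
Import Order.TTheory GRing.Theory Num.Theory.
Local Open Scope ring_scope.

Lemma additive_cross_diff (R : comPzRingType) (p11 p10 p01 p00 : R) :
  p11 - p10 = p01 - p00 ->
  p11 * p00 - p10 * p01 = - ((p10 - p00) * (p01 - p00)).
Proof.
move=> h; have -> : p11 = p01 - p00 + p10 by rewrite -h subrK.
ring.
Qed.

Section PositiveJoint.
Variables (R : realFieldType) (P : joint R).
Hypothesis P_gt0 : forall e d s, 0 < P e d s.

Local Notation p := (pS P).

Lemma pED_E e d : pED P e d = P e d true + P e d false.
Proof. by rewrite /pED /prob !big_bool; case: e; case: d; rewrite /= !(addr0, add0r). Qed.

Lemma pED_gt0 e d : 0 < pED P e d.
Proof. by rewrite pED_E addr_gt0. Qed.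

Lemma pS_E d e : p d e = P e d true / pED P e d.
Proof.
by rewrite pED_E /pS /cprob /prob !big_bool; case: e; case: d; rewrite /= !(addr0, add0r).
Qed.

Lemma pS_gt0 d e : 0 < p d e.
Proof. by rewrite pS_E divr_gt0 ?pED_gt0. Qed.

Lemma cell_S1 e d : P e d true = p d e * pED P e d.
Proof. by rewrite pS_E mulfVK ?lt0r_neq0 ?pED_gt0. Qed.

Lemma OR_ED_S1_E :
  OR_ED_S P true =
  (P true true true * P false false true) / (P true false true * P false true true).
Proof.
rewrite /OR_ED_S /pED_S /cprob /prob !big_bool /= !(addr0, add0r).
have PS1_gt0 : 0 < P true true true + P true false true +
                   (P false true true + P false false true) by rewrite !addr_gt0.
by field; rewrite !lt0r_neq0.
Qed.

Lemma OR_ED_S1_factor :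
  OR_ED_S P true = OR_ED P * (p true true * p false false / (p false true * p true false)).
Proof.
rewrite OR_ED_S1_E /OR_ED !cell_S1.
by field; rewrite !lt0r_neq0 ?pS_gt0 ?pED_gt0.
Qed.

Lemma OR_ED_gt0 : 0 < OR_ED P.
Proof. by rewrite /OR_ED divr_gt0 ?mulr_gt0 ?pED_gt0. Qed.

Hypothesis no_RD_interaction : RD_ES_D P true = RD_ES_D P false.

Let cross_diff :
  p true true * p false false - p true false * p false true =
  - ((p true false - p false false) * (p false true - p false false)).
Proof. exact: additive_cross_diff. Qed.

Lemma OR_ED_S1_le_OR_ED :
  (OR_ED_S P true <= OR_ED P) =
  (0 <= (p true false - p false false) * (p false true - p false false)).
Proof.
rewrite OR_ED_S1_factor ger_pMr ?OR_ED_gt0 // ler_pdivrMr; last exact: mulr_gt0 (pS_gt0 _ _) (pS_gt0 _ _).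
by rewrite mul1r -subr_le0 [p false true * _]mulrC cross_diff oppr_le0.
Qed.

Lemma OR_ED_le_OR_ED_S1 :
  (OR_ED P <= OR_ED_S P true) =
  ((p true false - p false false) * (p false true - p false false) <= 0).
Proof.
rewrite OR_ED_S1_factor ler_pMr ?OR_ED_gt0 // ler_pdivlMr; last exact: mulr_gt0 (pS_gt0 _ _) (pS_gt0 _ _).
by rewrite mul1r -subr_ge0 [p false true * _]mulrC cross_diff oppr_ge0.
Qed.

End PositiveJoint.

Theorem mainTheorem3 (R : realFieldType) (P : joint R) :
  is_pos_joint P ->
  RD_ES_D P true = RD_ES_D P false ->
  (((nondec_d P /\ nondec_e P) \/ (noninc_d P /\ noninc_e P)) ->
     OR_ED_S P true <= OR_ED P) /\
  (((nondec_d P /\ noninc_e P) \/ (noninc_d P /\ nondec_e P)) ->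
     OR_ED P <= OR_ED_S P true).
Proof.
move=> [P_gt0 _] noRD; split=> -[[mon_d mon_e]|[mon_d mon_e]].
- by rewrite OR_ED_S1_le_OR_ED // mulr_ge0 // subr_ge0.
- by rewrite OR_ED_S1_le_OR_ED // mulr_le0 // subr_le0.
- by rewrite OR_ED_le_OR_ED_S1 // mulr_ge0_le0 // (subr_ge0, subr_le0).
- by rewrite OR_ED_le_OR_ED_S1 // mulr_le0_ge0 // (subr_ge0, subr_le0).
Qed.
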